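(* Let $P$ be a finite poset, $R$ a commutative unital ring, and $D$ a derivation of $I^3(P,R)$. Then for all $x<y$ in $P$, $D(e_{xxy})=D(e_{xyy})=0$.
   Context: For a finite poset $P$, $P^3_\le=\{(x,y,z)\in P^3: x\le y\le z\}$, and $I^3(P,R)$ is the $R$-module of functions $f:P^3_\le\to R$ with multiplication $(fg)(x_1,x_2,x_3)=\sum f(x_1,y_1,y_2)g(y_1,y_2,x_3)$ over all $x_1\le y_1\le x_2\le y_2\le x_3$. For $x\le y\le z$, $e_{xyz}$ is the function equal to $1$ at $(x,y,z)$ and $0$ elsewhere. A derivation is an $R$-linear map $D:I^3(P,R)\to I^3(P,R)$ with $D(fg)=D(f)g+fD(g)$. *)

From HB Require Import structures.
From mathcomp Require Import all_boot all_order all_algebra.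
Set Implicit Arguments. Unset Strict Implicit. Unset Printing Implicit Defensive.
Import Order.TTheory GRing.Theory.
Local Open Scope ring_scope.

Section I3.
Variables (d : Order.disp_t) (P : finPOrderType d) (R : comPzRingType).

(* Ambient R-module of all functions P^3 -> R; I^3(P,R) is the submodule of
   functions supported on P^3_<= = {(x,y,z) | x <= y <= z}. *)
Local Notation fun3 := {ffun P * P * P -> R}.

Definition le3 (x y z : P) : bool := (x <= y)%O && (y <= z)%O.

Definition inI3 (f : fun3) : Prop :=
  forall x y z : P, ~~ le3 x y z -> f (x, y, z) = 0.

Definition mul3 (f g : fun3) : fun3 :=
  [ffun t => let: (x1, x2, x3) := t in
     if le3 x1 x2 x3 then
       \sum_(y1 : P) \sum_(y2 : P)
         (if [&& (x1 <= y1)%O, (y1 <= x2)%O, (x2 <= y2)%O & (y2 <= x3)%O]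
          then f (x1, y1, y2) * g (y1, y2, x3) else 0)
     else 0].

Definition scale3 (a : R) (f : fun3) : fun3 := [ffun t => a * f t].

Definition e3 (x y z : P) : fun3 :=
  [ffun t => if t == (x, y, z) then 1 else 0].

(* D is a derivation of I^3(P,R): an R-linear self-map of I^3(P,R)
   satisfying the Leibniz rule (D's values outside I^3 are irrelevant). *)
Definition derivation3 (D : fun3 -> fun3) : Prop :=
  [/\ forall f, inI3 f -> inI3 (D f),
      forall (a : R) f g, inI3 f -> inI3 g -> D (scale3 a f + g) = scale3 a (D f) + D g
    & forall f g, inI3 f -> inI3 g -> D (mul3 f g) = mul3 (D f) g + mul3 f (D g)].

End I3.

Notation fun3 P R := {ffun P * P * P -> R}.

From mathcomp Require Import all_boot all_order all_algebra.
Set Implicit Arguments. Unset Strict Implicit. Unset Printing Implicit Defensive.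
Import Order.TTheory GRing.Theory.
Local Open Scope ring_scope.

(* Basis elements multiply as e_{abc} e_{a'b'c'} = 0 unless (b,c) = (a',b'); moreover e_{xxx}
   is a left unit for e_{xxz} and e_{xxx} (e_{xxy} e_{xyy}) = e_{xxy}.  Applying the Leibniz
   rule to these identities and evaluating at well-chosen points shows that D(e_{xxz}) is
   supported at (x,x,z), that D(e_{xxx}) = 0, and then that D(e_{xyy})(x,y,y) = 0.
   The missing statements are mirror images: f |-> ((x,y,z) |-> f(z,y,x)) is an
   anti-isomorphism from I^3(P,R) onto I^3(P^op,R) (R being commutative), so it conjugates D
   into a derivation of I^3(P^op,R) and sends e_{abc} to e_{cba}; e.g. e_{xyy} becomes e_{yyx},
   which has the shape e_{x'x'y'} in P^op. *)


Section Incidence3.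
Variables (d : Order.disp_t) (P : finPOrderType d) (R : comPzRingType).
Implicit Types (f g : fun3 P R) (a b c p q r x y z : P).
Local Notation e := (e3 R).

Lemma inI3_e3 a b c : (a <= b)%O -> (b <= c)%O -> inI3 (e a b c).
Proof.
move=> le_ab le_bc p q r; rewrite ffunE; case: eqP => // -[-> -> ->].
by rewrite /le3 le_ab le_bc.
Qed.

Lemma inI3_mul3 f g : inI3 (mul3 f g).
Proof. by move=> p q r /negbTE le_pqr; rewrite ffunE /= le_pqr. Qed.

Lemma mul3_0l g : mul3 0 g = 0.
Proof.
apply/ffunP => -[[p q] r]; rewrite !ffunE /=; case: ifP => // _.
by apply: big1 => y1 _; apply: big1 => y2 _; rewrite ffunE mul0r if_same.
Qed.

Lemma sum2_single (F : P -> P -> R) a b :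
  (forall y1 y2, (y1, y2) != (a, b) -> F y1 y2 = 0) ->
  \sum_(y1 : P) \sum_(y2 : P) F y1 y2 = F a b.
Proof.
move=> F0; rewrite (bigD1 a) //= (bigD1 b) //= !big1 ?addr0 // => [y1 ne_y1a|y2 ne_y2b].
  by apply: big1 => y2 _; apply: F0; rewrite xpair_eqE (negbTE ne_y1a).
by apply: F0; rewrite xpair_eqE eqxx (negbTE ne_y2b).
Qed.

Lemma mul3_e3l a b c g p q r :
  mul3 (e a b c) g (p, q, r) =
  if [&& p == a, (a <= b)%O, (b <= q)%O, (q <= c)%O & (c <= r)%O]
  then g (b, c, r) else 0.
Proof.
rewrite ffunE /= (@sum2_single _ b c) => [|y1 y2 ne_y]; last first.
  rewrite ffunE; case: eqP => [[_ ey1 ey2]|_]; last by rewrite mul0r if_same.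
  by move: ne_y; rewrite ey1 ey2 eqxx.
rewrite ffunE; case: (p =P a) => [->|ne_pa] /=; last first.
  by rewrite (_ : (p, b, c) == _ = false) ?mul0r ?if_same //; apply/eqP => -[].
rewrite eqxx mul1r /le3.
case: (boolP [&& _, _, _ & _]) => [/and4P[le_ab le_bq le_qc le_cr]|_]; last by rewrite if_same.
by rewrite (le_trans le_ab le_bq) (le_trans le_qc le_cr).
Qed.

Lemma mul3_e3r f a b c p q r :
  mul3 f (e a b c) (p, q, r) =
  if [&& r == c, (p <= a)%O, (a <= q)%O, (q <= b)%O & (b <= c)%O]
  then f (p, a, b) else 0.
Proof.
rewrite ffunE /= (@sum2_single _ a b) => [|y1 y2 ne_y]; last first.
  rewrite ffunE; case: eqP => [[ey1 ey2 _]|_]; last by rewrite mulr0 if_same.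
  by move: ne_y; rewrite ey1 ey2 eqxx.
rewrite ffunE; case: (r =P c) => [->|ne_rc] /=; last first.
  by rewrite (_ : (a, b, r) == _ = false) ?mulr0 ?if_same ?andbF //; apply/eqP => -[].
rewrite eqxx mulr1 /le3.
case: (boolP [&& _, _, _ & _]) => [/and4P[le_pa le_aq le_qb le_bc]|_]; last by rewrite if_same.
by rewrite (le_trans le_pa le_aq) (le_trans le_qb le_bc).
Qed.

Lemma mul3_e3_orth a b c a' b' c' :
  (b, c) != (a', b') -> mul3 (e a b c) (e a' b' c') = 0.
Proof.
move=> ne; apply/ffunP => -[[p q] r]; rewrite mul3_e3l !ffunE; case: ifP => // _.
by case: eqP => // -[eb ec _]; move: ne; rewrite eb ec eqxx.
Qed.

Lemma mul3_e3_idl x z : (x <= z)%O -> mul3 (e x x x) (e x x z) = e x x z.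
Proof.
move=> le_xz; apply/ffunP => -[[p q] r].
rewrite mul3_e3l !ffunE !xpair_eqE !eqxx lexx /=; case: (p == x) => //=.
rewrite andbA -eq_le eq_sym; case: (q == x) => //=.
by case: eqP => [->|_]; rewrite ?le_xz ?if_same.
Qed.

Lemma mul3_e3_xxy_xyy x y : (x <= y)%O ->
  mul3 (e x x x) (mul3 (e x x y) (e x y y)) = e x x y.
Proof.
move=> le_xy; apply/ffunP => -[[p q] r].
rewrite mul3_e3l mul3_e3r !ffunE !xpair_eqE !eqxx !lexx le_xy /=; case: (p == x) => //=.
rewrite andbA -eq_le eq_sym; case: (q == x) => //=.
by case: eqP => [->|_]; rewrite ?le_xy ?if_same.
Qed.

Definition dual3 f : fun3 P^d R := [ffun t => let: (x, y, z) := t in f (z, y, x)].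

Definition undual3 (g : fun3 P^d R) : fun3 P R :=
  [ffun t => let: (x, y, z) := t in g (z, y, x)].

Lemma dual3K : cancel dual3 undual3.
Proof. by move=> f; apply/ffunP => -[[x y] z]; rewrite !ffunE. Qed.

Lemma inI3_dual3 f : inI3 f -> inI3 (dual3 f).
Proof. by move=> If x y z le_xyz; rewrite ffunE If // /le3 andbC. Qed.

Lemma inI3_undual3 (g : fun3 P^d R) : inI3 g -> inI3 (undual3 g).
Proof. by move=> Ig x y z le_xyz; rewrite ffunE Ig // /le3 andbC. Qed.

Lemma dual3D f g : dual3 (f + g) = dual3 f + dual3 g.
Proof. by apply/ffunP => -[[x y] z]; rewrite !ffunE. Qed.

Lemma dual3Z (k : R) f : dual3 (scale3 k f) = scale3 k (dual3 f).
Proof. by apply/ffunP => -[[x y] z]; rewrite !ffunE. Qed.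

Lemma undual3D (g h : fun3 P^d R) : undual3 (g + h) = undual3 g + undual3 h.
Proof. by apply/ffunP => -[[x y] z]; rewrite !ffunE. Qed.

Lemma undual3Z (k : R) (g : fun3 P^d R) : undual3 (scale3 k g) = scale3 k (undual3 g).
Proof. by apply/ffunP => -[[x y] z]; rewrite !ffunE. Qed.

Lemma undual3_e3 x y z : undual3 (@e3 _ P^d R z y x) = e x y z.
Proof.
apply/ffunP => -[[p q] r]; rewrite !ffunE.
by congr (if _ then _ else _); apply/eqP/eqP => -[-> -> ->].
Qed.

Lemma mul3_dual (g h : fun3 P^d R) : mul3 g h = dual3 (mul3 (undual3 h) (undual3 g)).
Proof.
apply/ffunP => -[[x1 x2] x3]; rewrite !ffunE /le3 andbC; case: ifP => // _.
rewrite exchange_big; apply: eq_bigr => y1 _; apply: eq_bigr => y2 _.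
rewrite !ffunE mulrC; congr (if _ then _ else _).
by rewrite !leEdual;
  case: (x3 <= y1 :> P)%O (y1 <= x2 :> P)%O (x2 <= y2 :> P)%O (y2 <= x1 :> P)%O => [] [] [] [].
Qed.

Definition dual_derivation (D : fun3 P R -> fun3 P R) (g : fun3 P^d R) : fun3 P^d R :=
  dual3 (D (undual3 g)).

Lemma dual_derivation_e3 D a b c p q r :
  dual_derivation D (@e3 _ P^d R c b a) (r, q, p) = D (e a b c) (p, q, r).
Proof. by rewrite /dual_derivation undual3_e3 ffunE. Qed.

End Incidence3.

Section Derivation.
Variables (d : Order.disp_t) (P : finPOrderType d) (R : comPzRingType).
Variables (D : fun3 P R -> fun3 P R) (HD : derivation3 D).
Implicit Types (f g : fun3 P R) (a b c p q r x y z : P).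
Local Notation e := (e3 R).

Lemma derivation3_inI3 f : inI3 f -> inI3 (D f).
Proof. by case: HD => ID _ _; apply: ID. Qed.

Lemma derivation3_mul f g : inI3 f -> inI3 g -> D (mul3 f g) = mul3 (D f) g + mul3 f (D g).
Proof. by case: HD => _ _ DM; apply: DM. Qed.

Lemma derivation3_0 : D 0 = 0.
Proof.
case: HD => _ DL _.
have I0 : inI3 (0 : fun3 P R) by move=> ? ? ? _; rewrite ffunE.
have := DL 1 0 0 I0 I0.
have scale1 f : scale3 1 f = f by apply/ffunP => t; rewrite ffunE mul1r.
by rewrite !scale1 addr0 => D0; apply: (addrI (D 0)); rewrite addr0 -D0.
Qed.

Lemma derivation3_mulE f g t : inI3 f -> inI3 g ->
  D (mul3 f g) t = mul3 (D f) g t + mul3 f (D g) t.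
Proof. by move=> If Ig; rewrite derivation3_mul // ffunE. Qed.

Lemma derivation3_mul_eq0 f g t : inI3 f -> inI3 g -> mul3 f g = 0 ->
  mul3 (D f) g t + mul3 f (D g) t = 0.
Proof. by move=> If Ig fg0; rewrite -derivation3_mulE // fg0 derivation3_0 ffunE. Qed.

Lemma derivation3_dual : derivation3 (dual_derivation D).
Proof.
rewrite /dual_derivation.
split=> [g Ig | k g h Ig Ih | g h Ig Ih].
- exact/inI3_dual3/derivation3_inI3/inI3_undual3.
- case: HD => _ DL _.
  by rewrite undual3D undual3Z (DL _ _ _ (inI3_undual3 Ig) (inI3_undual3 Ih)) dual3D dual3Z.
- rewrite mul3_dual dual3K (derivation3_mul (inI3_undual3 Ih) (inI3_undual3 Ig)).
  by rewrite dual3D [RHS]addrC !mul3_dual !dual3K.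
Qed.

Lemma derivation3_e3_idem_diag x : D (e x x x) (x, x, x) = 0.
Proof.
have Ix := inI3_e3 R (lexx x) (lexx x).
have := derivation3_mulE (x, x, x) Ix Ix.
rewrite (mul3_e3_idl R (lexx x)) mul3_e3l mul3_e3r eqxx lexx /= => E.
by apply: (addrI (D (e x x x) (x, x, x))); rewrite addr0 -E.
Qed.

Lemma derivation3_e3_mid x z p q r : (x <= z)%O -> q != x -> D (e x x z) (p, q, r) = 0.
Proof.
move=> le_xz ne_qx; have Ix := inI3_e3 R (lexx x) (lexx x).
rewrite -(mul3_e3_idl R le_xz) (derivation3_mulE _ Ix (inI3_e3 R (lexx x) le_xz)).
have x_q_x : (x <= q)%O && (q <= x)%O = false by rewrite -eq_le eq_sym (negbTE ne_qx).
rewrite mul3_e3l mul3_e3r !ifF ?addr0 //.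
all: by apply/negbTE/and5P => -[_ _ le_xq le_qx _]; rewrite le_xq le_qx in x_q_x.
Qed.

Lemma derivation3_e3_right a b c p q :
  (a <= b)%O -> (b <= c)%O -> q != c -> D (e a b c) (p, b, q) = 0.
Proof.
move=> le_ab le_bc ne_qc.
have [/andP[le_pb le_bq]|not_le] := boolP (le3 p b q); last first.
  exact: derivation3_inI3 (inI3_e3 R le_ab le_bc) _ _ _ not_le.
have orth : mul3 (e a b c) (e b q q) = 0.
  by apply: mul3_e3_orth; rewrite xpair_eqE eqxx eq_sym.
have := derivation3_mul_eq0 (p, q, q) (inI3_e3 R le_ab le_bc) (inI3_e3 R le_bq (lexx q)) orth.
rewrite mul3_e3r mul3_e3l eqxx le_pb le_bq lexx /=.
case: ifP => [/and4P[_ _ le_qc le_cq]|_]; last by rewrite addr0.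
by case/eqP: ne_qc; apply/le_anti; rewrite le_qc le_cq.
Qed.

End Derivation.

Lemma derivation3_e3_left d (P : finPOrderType d) (R : comPzRingType)
    (D : fun3 P R -> fun3 P R) (a b c p q : P) :
  derivation3 D -> (a <= b)%O -> (b <= c)%O -> p != a -> D (e3 R a b c) (p, b, q) = 0.
Proof.
move=> HD le_ab le_bc ne_pa; rewrite -(dual_derivation_e3 D).
exact: (derivation3_e3_right (derivation3_dual HD)) le_bc le_ab ne_pa.
Qed.

Section Idempotents.
Variables (d : Order.disp_t) (P : finPOrderType d) (R : comPzRingType).
Variables (D : fun3 P R -> fun3 P R) (HD : derivation3 D).
Local Notation e := (e3 R).

Lemma derivation3_e3_xxz_support (x z : P) t :
  (x <= z)%O -> t != (x, x, z) -> D (e x x z) t = 0.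
Proof.
move=> le_xz; case: t => [[p q] r].
have [->|ne_qx] := eqVneq q x; last by move=> _; apply: derivation3_e3_mid.
have [->|ne_px] := eqVneq p x; last by move=> _; apply: derivation3_e3_left.
have [->|ne_rz] := eqVneq r z; last by move=> _; apply: derivation3_e3_right.
by rewrite eqxx.
Qed.

Lemma derivation3_e3_idem (x : P) : D (e x x x) = 0.
Proof.
apply/ffunP => t; rewrite [RHS]ffunE.
have [->|ne_t] := eqVneq t (x, x, x); first exact: derivation3_e3_idem_diag.
exact: derivation3_e3_xxz_support.
Qed.

Lemma derivation3_e3_xyy_diag (x y : P) : (x <= y)%O -> D (e x y y) (x, y, y) = 0.
Proof.
move=> le_xy.
have Ixxx := inI3_e3 R (lexx x) (lexx x).
have Ixxy := inI3_e3 R (lexx x) le_xy.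
have Ixyy := inI3_e3 R le_xy (lexx y).
(* At (x,x,y) the Leibniz rule for e_{xxy} = e_{xxx} (e_{xxy} e_{xyy}) reads
   D(e_{xxy})(x,x,y) = D(e_{xxy})(x,x,y) + D(e_{xyy})(x,y,y). *)
have := derivation3_mulE HD (x, x, y) Ixxx (inI3_mul3 (e x x y) (e x y y)).
rewrite (mul3_e3_xxy_xyy R le_xy) derivation3_e3_idem mul3_0l ffunE add0r.
rewrite mul3_e3l eqxx lexx le_xy /= (derivation3_mulE HD _ Ixxy Ixyy).
rewrite mul3_e3r mul3_e3l !eqxx !lexx le_xy /= => E.
by apply: (addrI (D (e x x y) (x, x, y))); rewrite addr0 -E.
Qed.

End Idempotents.

Lemma derivation3_e3_xxy_diag d (P : finPOrderType d) (R : comPzRingType)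
    (D : fun3 P R -> fun3 P R) (x y : P) :
  derivation3 D -> (x <= y)%O -> D (e3 R x x y) (x, x, y) = 0.
Proof.
move=> HD le_xy; rewrite -(dual_derivation_e3 D).
exact: (derivation3_e3_xyy_diag (derivation3_dual HD)) le_xy.
Qed.

Lemma derivation3_e3_xxy d (P : finPOrderType d) (R : comPzRingType)
    (D : fun3 P R -> fun3 P R) (x y : P) :
  derivation3 D -> (x <= y)%O -> D (e3 R x x y) = 0.
Proof.
move=> HD le_xy; apply/ffunP => t; rewrite [RHS]ffunE.
have [->|ne_t] := eqVneq t (x, x, y); first exact: derivation3_e3_xxy_diag.
exact: derivation3_e3_xxz_support.
Qed.

Lemma derivation3_e3_xyy d (P : finPOrderType d) (R : comPzRingType)
    (D : fun3 P R -> fun3 P R) (x y : P) :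
  derivation3 D -> (x <= y)%O -> D (e3 R x y y) = 0.
Proof.
move=> HD le_xy; apply/ffunP => -[[p q] r]; rewrite [RHS]ffunE -(dual_derivation_e3 D).
by rewrite (derivation3_e3_xxy (derivation3_dual HD) le_xy) ffunE.
Qed.

Unset Implicit Arguments.
Set Strict Implicit.

Theorem lemma4p5 (d : Order.disp_t) (P : finPOrderType d) (R : comPzRingType)
    (D : fun3 P R -> fun3 P R) :
  derivation3 D ->
  forall x y : P, (x < y)%O ->
    D (e3 R x x y) = 0 /\ D (e3 R x y y) = 0.
Proof.
move=> HD x y /ltW le_xy.
by split; [apply: derivation3_e3_xxy | apply: derivation3_e3_xyy].
Qed.
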